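(* Let $\Phi=\bigwedge_{i=1}^m f_i\mid g_i$ be a system of divisibility constraints in $d$ variables with the elimination property for a total order $\preceq$ of its variables. Then (i) $|\Delta(\Phi)|\le 2m^2(d+2)$, and (ii) every coefficient and constant of every polynomial in $\Delta(\Phi)$ has bit length at most $(d+2)(\langle\|\Phi\|_\infty\rangle+1)$, i.e. $\langle\|\Delta(\Phi)\|_\infty\rangle\le(d+2)(\langle\|\Phi\|_\infty\rangle+1)$.
   Context: Linear polynomials: $f=a_1x_1+\dots+a_dx_d+c$ with integer coefficients; $\gcd(f)=\gcd(a_1,\dots,a_d,c)$; $f$ is primitive if $f\ne0$ and $\gcd(f)=1$; the primitive part of a non-zero $g$ is the unique primitive $f$ with $g=\gcd(g)f$. A system of divisibility constraints is $\Phi=\bigwedge_{i=1}^m f_i\mid g_i$ with $m\ge1$, linear $f_i\ne0$, $g_i$; $\mathrm{terms}(\Phi)=\{f_i,g_i\}$. Divisibility module: for primitive $f$, $M_f(\Phi)$ is the smallest set of linear polynomials containing $f$, closed under integer linear combinations, and such that whenever $g\mid h$ is a constraint of $\Phi$ and $b\cdot g\in M_f(\Phi)$ for some $b\in\mathbb Z$, then $b\cdot h\in M_f(\Phi)$. Leading variable: for a total order $x_1\preceq\dots\preceq x_d$, $\mathrm{lv}(f)$ is the largest variable with non-zero coefficient in $f$, and $\mathrm{lv}(f)=\bot=:x_0$ for constant $f$. Elimination property for $\preceq$: for every primitive part $f$ of a polynomial appearing as a left-hand side in $\Phi$ and every $0\le k\le d$, the set $\{g:\mathrm{lv}(g)\preceq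 x_k\text{ and } f\mid g\text{ appears in }\Phi\}$ is a linearly independent set forming a basis of $M_f(\Phi)\cap\mathbb Z[x_1,\dots,x_k]$. S-polynomials: for $f,g$ with $\mathrm{lv}(f)=x_l$, $\mathrm{lv}(g)=x_k$, $S(f,g)=b_k f-a_l g$ where $a_l$ is the coefficient of $x_l$ in $f$ and $b_k$ that of $x_k$ in $g$ (if $f$ is constant, $a_l:=f$; if $g$ is constant, $b_k:=g$). For primitive $f$, $\Delta_f(\Phi)$ is the smallest set containing $\mathrm{terms}(\Phi)$ such that whenever $f\mid g$ occurs in $\Phi$ and $h\in\Delta_f(\Phi)$ with $\mathrm{lv}(g)=\mathrm{lv}(h)$, then $S(g,h)\in\Delta_f(\Phi)$; $\Delta(\Phi)$ is the union of $\Delta_f(\Phi)$ over all primitive parts $f$ of polynomials in $\mathrm{terms}(\Phi)$. $\|\cdot\|_\infty$ of a set of polynomials is the maximum absolute value of their coefficients and constants; $\langle a\rangle=1+\lceil\log_2(|a|+1)\rceil$. *)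

From HB Require Import structures.
From mathcomp Require Import all_boot all_order all_algebra all_fingroup.
Set Implicit Arguments. Unset Strict Implicit. Unset Printing Implicit Defensive.
Import Order.TTheory GRing.Theory Num.Theory.
Local Open Scope ring_scope.

(* A linear polynomial a_1 x_1 + ... + a_d x_d + c with integer coefficients:
   (coefficient function, constant). *)
Definition linpoly (d : nat) : Type := ({ffun 'I_d -> int} * int)%type.

Section LinPoly.
Variable d : nat.
Implicit Types p q f g h : linpoly d.

Definition lp0 : linpoly d := ([ffun=> 0], 0).
Definition lp_add p q : linpoly d := ([ffun i => p.1 i + q.1 i], p.2 + q.2).
Definition lp_scale (a : int) p : linpoly d := ([ffun i => a * p.1 i], a * p.2).
Definition lp_sub p q : linpoly d := lp_add p (lp_scale (-1) q).

Definition lincomb (c : linpoly d -> int) (s : seq (linpoly d)) : linpoly d :=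
  foldr (fun g acc => lp_add (lp_scale (c g) g) acc) lp0 s.

Definition lp_gcd p : nat :=
  gcdn (\big[gcdn/0%N]_(i < d) `|p.1 i|%N) `|p.2|%N.

Definition primitive p : bool := (p != lp0) && (lp_gcd p == 1%N).

Definition is_prim_part f g : Prop :=
  g != lp0 /\ primitive f /\ g = lp_scale (lp_gcd g)%:Z f.

Definition lp_norm p : nat := maxn (\max_(i < d) `|p.1 i|%N) `|p.2|%N.

(* Total order on variables given by a rank bijection r : variable i is the
   (r i).+1-th variable x_{(r i)+1} in the order x_1 <= ... <= x_d.
   lvl r p = k when lv(p) = x_k, and lvl r p = 0 when lv(p) = bot = x_0. *)
Definition lvl (r : {perm 'I_d}) p : nat := \max_(i < d | p.1 i != 0) (r i).+1.

(* coefficient of the leading variable; the constant if p is constant *)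
Definition lcoef (r : {perm 'I_d}) p : int :=
  if [pick i | (r i).+1 == lvl r p] is Some i then p.1 i else p.2.

Definition spoly (r : {perm 'I_d}) f g : linpoly d :=
  lp_sub (lp_scale (lcoef r g) f) (lp_scale (lcoef r f) g).

End LinPoly.

(* A system of divisibility constraints /\_i f_i | g_i, as the list of pairs (f_i, g_i). *)
Definition system (d : nat) := seq (linpoly d * linpoly d).

Definition terms d (Phi : system d) : seq (linpoly d) :=
  [seq c.1 | c <- Phi] ++ [seq c.2 | c <- Phi].

Definition sys_norm d (Phi : system d) : nat := \max_(t <- terms Phi) lp_norm t.

Definition bitlen (n : nat) : nat := (1 + up_log 2 n.+1)%N.

Inductive inM d (Phi : system d) (f : linpoly d) : linpoly d -> Prop :=
| M_gen : inM Phi f f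
| M_lin (p q : linpoly d) (a b : int) :
    inM Phi f p -> inM Phi f q -> inM Phi f (lp_add (lp_scale a p) (lp_scale b q))
| M_div (g h : linpoly d) (b : int) :
    (g, h) \in Phi -> inM Phi f (lp_scale b g) -> inM Phi f (lp_scale b h).

Definition elim_set d (r : {perm 'I_d}) (Phi : system d) (f : linpoly d) (k : nat) :=
  undup [seq c.2 | c <- Phi & (c.1 == f) && (lvl r c.2 <= k)%N].

Definition lin_indep d (s : seq (linpoly d)) : Prop :=
  forall c : linpoly d -> int, lincomb c s = lp0 d -> forall g, g \in s -> c g = 0.

Definition elimination_property d (r : {perm 'I_d}) (Phi : system d) : Prop :=
  forall f : linpoly d, (exists2 c, c \in Phi & is_prim_part f c.1) ->
  forall k : nat, (k <= d)%N ->
    lin_indep (elim_set r Phi f k) /\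
    (forall h, inM Phi f h -> (lvl r h <= k)%N ->
       exists c : linpoly d -> int, h = lincomb c (elim_set r Phi f k)).

Inductive inDelta_f d (r : {perm 'I_d}) (Phi : system d) (f : linpoly d) : linpoly d -> Prop :=
| D_term t : t \in terms Phi -> inDelta_f r Phi f t
| D_spoly g h : (f, g) \in Phi -> inDelta_f r Phi f h -> lvl r g = lvl r h ->
    inDelta_f r Phi f (spoly r g h).

Definition inDelta d (r : {perm 'I_d}) (Phi : system d) (p : linpoly d) : Prop :=
  exists2 f, (exists2 t, t \in terms Phi & is_prim_part f t) & inDelta_f r Phi f p.

From mathcomp Require Import all_boot all_order all_algebra all_fingroup zify.
Set Implicit Arguments. Unset Strict Implicit. Unset Printing Implicit Defensive.
Import Order.TTheory GRing.Theory Num.Theory.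
Local Open Scope ring_scope.

(* The heart of the proof is a uniqueness property: if Phi has the elimination
   property, then for every primitive f and every level l there is at most one
   constraint f | g in Phi with lv(g) = x_l ([rhs_unique_at_level]).  Indeed, for
   two such g1 <> g2 the S-polynomial S(g1, g2) = b g1 - a g2 lies in M_f(Phi)
   strictly below level l, so it is a combination of the basis elements of lower
   level; this yields a linear relation on the basis at level l whose coefficient
   on g1 is the leading coefficient of g2, which is therefore 0.

   Hence Delta_f(Phi) is generated from terms(Phi) by iterating one map
   [spoly_step f], h |-> S(g, h) with g the unique right-hand side at the level of h.
   Each step lowers the leading variable, so after at most d + 1 steps the orbit is
   stationary ([iter_stationary]); this gives |Delta(Phi)| <= |Phi| * 2|Phi| * (d+2).
   For the coefficients, ||S(g, h)|| <= 2 ||g|| ||h|| gives by induction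
   ||p|| <= (2N + 1)^(d - lv(p)) N on Delta_f(Phi), with N = ||Phi||, and a bit-length
   computation ([bitlen_bound]) concludes. *)

Section LinearPolynomials.
Variable d : nat.
Implicit Types p q g h : linpoly d.

Lemma lp_ext p q : (forall i, p.1 i = q.1 i) -> p.2 = q.2 -> p = q.
Proof. by case: p q => [p1 p2] [q1 q2] /= eq1 ->; congr pair; apply/ffunP. Qed.

Lemma lp0_coef i : (0 : linpoly d).1 i = 0.
Proof. by rewrite /= ffunE. Qed.

Lemma lp_scale_coef a p i : (lp_scale a p).1 i = a * p.1 i.
Proof. by rewrite /= ffunE. Qed.

Lemma lp_scale0 p : lp_scale 0 p = 0.
Proof. by apply: lp_ext => [i|]; rewrite ?lp_scale_coef ?lp0_coef /= mul0r. Qed.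

Lemma lp_scale1 p : lp_scale 1 p = p.
Proof. by apply: lp_ext => [i|]; rewrite ?lp_scale_coef /= mul1r. Qed.

Lemma lp_scaleB a b p : lp_scale (a - b) p = lp_scale a p - lp_scale b p.
Proof. by apply: lp_ext => [i|]; rewrite /= ?ffunE /= mulrBl. Qed.

Lemma lincombE c (s : seq (linpoly d)) : lincomb c s = \sum_(g <- s) lp_scale (c g) g.
Proof. by elim: s => [|g s IH]; rewrite ?big_nil ?big_cons //= IH. Qed.

Variable r : {perm 'I_d}.

Lemma spolyE g h : spoly r g h = lp_scale (lcoef r h) g - lp_scale (lcoef r g) h.
Proof. by apply: lp_ext => [i|]; rewrite /spoly /lp_sub /lp_add /= ?ffunE mulN1r. Qed.

Lemma spoly_coef g h i : (spoly r g h).1 i = lcoef r h * g.1 i - lcoef r g * h.1 i.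
Proof. by rewrite spolyE /= !ffunE. Qed.

Lemma spoly_const g h : (spoly r g h).2 = lcoef r h * g.2 - lcoef r g * h.2.
Proof. by rewrite spolyE. Qed.

End LinearPolynomials.

Section LeadingVariable.
Variables (d : nat) (r : {perm 'I_d}).
Implicit Types p g h : linpoly d.

Lemma lvl_le_dim p : (lvl r p <= d)%N.
Proof. by apply/bigmax_leqP => i _; exact: ltn_ord. Qed.

Lemma coef_above_lvl p i : (lvl r p < (r i).+1)%N -> p.1 i = 0.
Proof.
move=> lt_lvl; apply/eqP; apply: contraTT lt_lvl => nz_pi; rewrite -leqNgt.
exact: (@leq_bigmax_cond _ _ (fun j => (r j).+1) i nz_pi).
Qed.

Lemma lvl_leP p k : (forall i, (k < (r i).+1)%N -> p.1 i = 0) -> (lvl r p <= k)%N.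
Proof.
move=> zero_above; apply/bigmax_leqP => i nz_pi; rewrite leqNgt.
by apply: contra nz_pi => /zero_above ->.
Qed.

Lemma lvl0 : lvl r (0 : linpoly d) = 0%N.
Proof. by apply/eqP; rewrite -leqn0; apply: lvl_leP => i _; exact: lp0_coef. Qed.

Lemma lvl_witness p : (0 < lvl r p)%N -> exists2 i, (r i).+1 = lvl r p & p.1 i != 0.
Proof.
move=> lvl_gt0; have : (0 < #|[pred i | p.1 i != 0]|)%N.
  rewrite lt0n; apply: contraTneq lvl_gt0 => /card0_eq zero; rewrite -leqNgt.
  by apply: lvl_leP => i _; apply/eqP; move: (zero i); rewrite !inE => /negbFE.
by case/(eq_bigmax_cond (fun i => (r i).+1)) => i; rewrite inE => nz_pi eq_max; exists i.
Qed.

Lemma lcoef_at_lvl p i : (r i).+1 = lvl r p -> lcoef r p = p.1 i.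
Proof.
move=> ri_lvl; rewrite /lcoef; case: pickP => [j /eqP rj_lvl|]; last first.
  by move/(_ i); rewrite ri_lvl eqxx.
by congr (p.1 _); apply: (@perm_inj _ r); apply/ord_inj/succn_inj; rewrite rj_lvl ri_lvl.
Qed.

Lemma lcoef_constant p : lvl r p = 0%N -> lcoef r p = p.2.
Proof. by move=> lvl_p; rewrite /lcoef; case: pickP => // j; rewrite lvl_p. Qed.

Lemma lcoef_neq0 p : (0 < lvl r p)%N -> lcoef r p != 0.
Proof. by case/lvl_witness => i /lcoef_at_lvl ->. Qed.

Lemma spoly_lvl_lt g h : lvl r g = lvl r h -> (0 < lvl r h)%N ->
  (lvl r (spoly r g h) < lvl r h)%N.
Proof.
move=> eq_lvl lvl_gt0; rewrite -(prednK lvl_gt0) ltnS.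
apply: lvl_leP => i; rewrite (prednK lvl_gt0) leq_eqVlt => /orP[/eqP ri_lvl|lt_lvl].
  rewrite spoly_coef (lcoef_at_lvl (esym ri_lvl)) (@lcoef_at_lvl g i) ?eq_lvl //.
  by rewrite mulrC subrr.
by rewrite spoly_coef !coef_above_lvl ?eq_lvl // !mulr0 subrr.
Qed.

Lemma spoly_constants g h : lvl r g = 0%N -> lvl r h = 0%N -> spoly r g h = 0.
Proof.
move=> lvl_g lvl_h; apply: lp_ext => [i|].
  by rewrite spoly_coef lp0_coef !coef_above_lvl ?lvl_g ?lvl_h // !mulr0 subrr.
by rewrite spoly_const !lcoef_constant // mulrC subrr.
Qed.

End LeadingVariable.

Section Norms.
Variable d : nat.
Implicit Types p g h : linpoly d.

Lemma norm_coef p i : (`|p.1 i| <= lp_norm p)%N.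
Proof. by apply: leq_trans (leq_maxl _ _); exact: (@leq_bigmax _ (fun j => `|p.1 j|%N)). Qed.

Lemma norm_const p : (`|p.2| <= lp_norm p)%N.
Proof. exact: leq_maxr. Qed.

Lemma norm_lcoef (r : {perm 'I_d}) p : (`|lcoef r p| <= lp_norm p)%N.
Proof. by rewrite /lcoef; case: pickP => [i _|_]; [exact: norm_coef|exact: norm_const]. Qed.

Lemma norm_leP p n :
  (forall i, `|p.1 i| <= n)%N -> (`|p.2| <= n)%N -> (lp_norm p <= n)%N.
Proof. by move=> le_coef le_const; rewrite geq_max le_const andbT; apply/bigmax_leqP. Qed.

Lemma norm0 : lp_norm (0 : linpoly d) = 0%N.
Proof. by apply/eqP; rewrite -leqn0; apply: norm_leP => [i|]; rewrite ?lp0_coef. Qed.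

Lemma norm_spoly (r : {perm 'I_d}) g h :
  (lp_norm (spoly r g h) <= 2 * lp_norm g * lp_norm h)%N.
Proof.
have cross (a x b y : int) : (`|a| <= lp_norm h)%N -> (`|x| <= lp_norm g)%N ->
    (`|b| <= lp_norm g)%N -> (`|y| <= lp_norm h)%N ->
    (`|(a * x - b * y)%R| <= 2 * lp_norm g * lp_norm h)%N.
  move=> le_a le_x le_b le_y; apply: leq_trans (leqD_dist _ 0 _) _.
  rewrite subr0 sub0r abszN !abszM -mulnA mul2n -addnn.
  by apply: leq_add; [rewrite mulnC|]; apply: leq_mul.
apply: norm_leP => [i|]; rewrite ?spoly_coef ?spoly_const;
  by apply: cross; rewrite ?norm_lcoef ?norm_coef ?norm_const.
Qed.

End Norms.

Lemma delta_f_norm d (r : {perm 'I_d}) (Phi : system d) f p : inDelta_f r Phi f p ->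
  (lp_norm p <= (2 * sys_norm Phi).+1 ^ (d - lvl r p) * sys_norm Phi)%N.
Proof.
set N := sys_norm Phi; set K := (2 * N).+1.
have norm_term t : t \in terms Phi -> (lp_norm t <= N)%N by move=> t_in; exact: leq_bigmax_seq.
elim=> [t t_in|g h fg _ IH eq_lvl].
  by rewrite (leq_trans (norm_term t t_in)) // leq_pmull // expn_gt0.
have [lvl_h|lvl_gt0] := posnP (lvl r h); first by rewrite spoly_constants ?eq_lvl // norm0.
have g_in : g \in terms Phi by rewrite mem_cat; apply/orP; right; apply/mapP; exists (f, g).
apply: leq_trans (norm_spoly r g h) _.
apply: (@leq_trans (K * (K ^ (d - lvl r h) * N))).
  by apply: leq_mul => //; apply: leqW; rewrite leq_mul2l norm_term ?orbT.
rewrite mulnA -expnS leq_mul2r leq_pexp2l ?orbT //.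
by have := spoly_lvl_lt eq_lvl lvl_gt0; have := lvl_le_dim r h; lia.
Qed.

Lemma expn_mono_base m n e : (m <= n)%N -> (m ^ e <= n ^ e)%N.
Proof. by move=> le_mn; case: e => [|e] //; rewrite leq_exp2r. Qed.

Lemma bitlen_bound d n N : (n <= (2 * N).+1 ^ d * N)%N ->
  (bitlen n <= (d + 2) * (bitlen N + 1))%N.
Proof.
(* With 2^U >= N + 1: n + 1 <= (2(N + 1))^d (N + 1) <= 2^((U + 1) d + U). *)
move=> le_n; rewrite /bitlen; set U := up_log 2 N.+1.
have N_lt : (N.+1 <= 2 ^ U)%N by exact: up_logP.
have n_lt : (n.+1 <= (2 * N.+1) ^ d * N.+1)%N.
  have le_pow : ((2 * N).+1 ^ d <= (2 * N.+1) ^ d)%N by rewrite expn_mono_base // mulnS.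
  have := leq_mul le_pow (leqnn N); have : (0 < (2 * N.+1) ^ d)%N by rewrite expn_gt0.
  rewrite mulnS; lia.
have pow_le : ((2 * N.+1) ^ d * N.+1 <= 2 ^ (U.+1 * d + U))%N.
  by rewrite expnD expnM leq_mul // expn_mono_base // expnS leq_mul2l N_lt orbT.
have := up_log_min (isT : (1 < 2)%N) (leq_trans n_lt pow_le); nia.
Qed.

Section Stationary.
Variables (T : Type) (F : T -> T) (mu : T -> nat).
Hypothesis F_decr : forall y, F y = y \/ (mu (F y) < mu y)%N.

Lemma iter_measure_fixed x : F (iter (mu x) F x) = iter (mu x) F x.
Proof.
suff fixed n : forall y, (mu y <= n)%N -> F (iter n F y) = iter n F y by exact: fixed.
elim: n => [|n IH] y le_y.
  by case: (F_decr y) => // /leq_trans/(_ le_y).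
case: (F_decr y) => [Fy|lt_y]; first by rewrite !iter_fix.
by rewrite iterSr IH // -ltnS (leq_trans lt_y).
Qed.

Lemma iter_stationary x k : exists2 j, (j <= mu x)%N & iter k F x = iter j F x.
Proof.
have [le_k|lt_k] := leqP k (mu x); first by exists k.
exists (mu x) => //; rewrite -(subnK (ltnW lt_k)) iterD.
exact/iter_fix/iter_measure_fixed.
Qed.

End Stationary.

Section DivisibilityModule.
Variables (d : nat) (r : {perm 'I_d}) (Phi : system d).
Implicit Types f g h p : linpoly d.

Lemma inM_rhs f g : (f, g) \in Phi -> inM Phi f g.
Proof.
by have := @M_div d Phi f f g 1; rewrite !lp_scale1 => div_fg /div_fg; apply; exact: M_gen.
Qed.

Lemma inM_spoly f g1 g2 :
  (f, g1) \in Phi -> (f, g2) \in Phi -> inM Phi f (spoly r g1 g2).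
Proof.
move=> fg1 fg2; have := M_lin (lcoef r g2) (- lcoef r g1) (inM_rhs fg1) (inM_rhs fg2).
by rewrite -[- lcoef r g1]sub0r lp_scaleB lp_scale0 sub0r spolyE.
Qed.

Lemma mem_elim_set f g k :
  (f, g) \in Phi -> (lvl r g <= k)%N -> g \in elim_set r Phi f k.
Proof.
by move=> fg le_k; rewrite mem_undup; apply/mapP; exists (f, g); rewrite // mem_filter /= eqxx le_k.
Qed.

Lemma elim_set_filter f k k' : (k' <= k)%N ->
  [seq g <- elim_set r Phi f k | (lvl r g <= k')%N] = elim_set r Phi f k'.
Proof.
move=> le_k; rewrite /elim_set filter_undup filter_map -filter_predI.
congr (undup (map _ _)); apply: eq_filter => c /=.
by case: (c.1 == f); case: leqP => //= le_k'; rewrite (leq_trans le_k' le_k).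
Qed.

Lemma prim_part_self f : primitive f -> is_prim_part f f.
Proof.
by case/andP=> nz_f /eqP gcd1; rewrite /is_prim_part gcd1 lp_scale1 /primitive nz_f gcd1.
Qed.

End DivisibilityModule.

Section EliminationProperty.
Variables (d : nat) (r : {perm 'I_d}) (Phi : system d).
Implicit Types f g h p : linpoly d.
Hypothesis EP : elimination_property r Phi.

Section SameLevel.
Variables (f g1 g2 : linpoly d).
Hypotheses (prim_f : primitive f) (fg1 : (f, g1) \in Phi) (fg2 : (f, g2) \in Phi).
Hypothesis same_lvl : lvl r g1 = lvl r g2.
Let EPf := EP (ex_intro2 _ _ (f, g1) fg1 (prim_part_self prim_f)).

Lemma spoly_lower_comb : exists c : linpoly d -> int,
  spoly r g1 g2 =
  \sum_(g <- elim_set r Phi f (lvl r g1) | (lvl r g < lvl r g1)%N) lp_scale (c g) g.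
Proof.
set l := lvl r g1; have [l0|l_gt0] := posnP l.
  exists (fun _ => 0); rewrite big_pred0 => [|g]; last by rewrite l0 ltn0.
  by apply: spoly_constants; rewrite -?same_lvl.
have le_l1 : (l.-1 <= d)%N by rewrite (leq_trans (leq_pred _)) ?lvl_le_dim.
have lvl_S : (lvl r (spoly r g1 g2) <= l.-1)%N.
  by rewrite -ltnS prednK // /l same_lvl spoly_lvl_lt // -same_lvl.
have [_ span] := EPf le_l1.
have [c ->] := span _ (inM_spoly r fg1 fg2) lvl_S.
exists c; rewrite lincombE -(elim_set_filter r Phi _ (leq_pred l)) big_filter.
by apply: eq_bigl => g; rewrite -ltnS prednK.
Qed.

(* Linear independence of the basis at level lv(g1) then kills the leading
   coefficient of g2, which is the coefficient of g1 in the relation above. *)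
Lemma lcoef_eq0_same_level : g1 != g2 -> lcoef r g2 = 0.
Proof.
move=> neq_g; have [indep _] := EPf (lvl_le_dim r g1).
set l := lvl r g1; set L := elim_set r Phi f l.
have g1L : g1 \in L by apply: mem_elim_set.
have g2L : g2 \in L by apply: mem_elim_set => //; rewrite /l same_lvl.
have [c Sc] := spoly_lower_comb.
have single (g0 : linpoly d) a : g0 \in L ->
    \sum_(g <- L) lp_scale (if g == g0 then a else 0) g = lp_scale a g0.
  move=> g0L; rewrite (bigD1_seq g0) ?undup_uniq //= eqxx big1 ?addr0 // => g /negbTE ->.
  exact: lp_scale0.
pose c' g := (if g == g1 then lcoef r g2 else 0) - (if g == g2 then lcoef r g1 else 0)
  - (if (lvl r g < l)%N then c g else 0).
have rel : lincomb c' L = lp0 d.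
  rewrite lincombE; under eq_bigr => g _ do rewrite !lp_scaleB.
  rewrite !sumrB !single // -spolyE Sc big_mkcond /=.
  rewrite (eq_bigr (fun g => lp_scale (if (lvl r g < l)%N then c g else 0) g)) ?subrr //.
  by move=> g _; case: ifP; rewrite ?lp_scale0.
by have := indep c' rel g1 g1L; rewrite /c' eqxx (negbTE neq_g) ltnn !subr0.
Qed.

End SameLevel.

Lemma rhs_unique_at_level f g1 g2 : primitive f ->
  (f, g1) \in Phi -> (f, g2) \in Phi -> lvl r g1 = lvl r g2 -> g1 = g2.
Proof.
move=> prim_f fg1 fg2 same_lvl; apply/eqP; apply: contraT => neq_g.
have lc2 := lcoef_eq0_same_level prim_f fg1 fg2 same_lvl neq_g.
have [lvl_g2|] := posnP (lvl r g2); last by move/lcoef_neq0; rewrite lc2 eqxx.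
have lvl_g1 : lvl r g1 = 0%N by rewrite same_lvl.
have lc1 : lcoef r g1 = 0.
  by apply: lcoef_eq0_same_level prim_f fg2 fg1 (esym same_lvl) _; rewrite eq_sym.
suff eq_g : g1 = g2 by rewrite eq_g eqxx in neq_g.
apply: lp_ext => [i|]; first by rewrite !(coef_above_lvl (r := r)) ?lvl_g1 ?lvl_g2.
by rewrite -(lcoef_constant lvl_g1) -(lcoef_constant lvl_g2) lc1 lc2.
Qed.

Definition spoly_step f h : linpoly d :=
  if ohead [seq c.2 | c <- Phi & (c.1 == f) && (lvl r c.2 == lvl r h)] is Some g
  then spoly r g h else h.

Lemma spoly_stepP f h :
  (spoly_step f h = h /\ forall g, (f, g) \in Phi -> lvl r g <> lvl r h) \/
  exists g, [/\ (f, g) \in Phi, lvl r g = lvl r h & spoly_step f h = spoly r g h].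
Proof.
rewrite /spoly_step; set s := [seq _ | _ <- _ & _].
have mem_s g : (g \in s) = ((f, g) \in Phi) && (lvl r g == lvl r h).
  apply/mapP/andP => [[c]|[fg /eqP eq_lvl]]; last first.
    by exists (f, g); rewrite // mem_filter /= eqxx eq_lvl eqxx.
  rewrite mem_filter => /andP[/andP[/eqP <- /eqP eq_lvl] c_in] ->.
  by rewrite -surjective_pairing c_in eq_lvl.
case: s mem_s => [|g s'] /= mem_s.
  by left; split => // g fg eq_lvl; move: (mem_s g); rewrite fg eq_lvl eqxx.
by right; exists g; move: (mem_s g); rewrite mem_head => /esym/andP[fg /eqP].
Qed.

(* By uniqueness of the right-hand side, [spoly_step] performs every S-polynomial
   rule of Delta_f(Phi) ... *)
Lemma spoly_step_spoly f g h : primitive f ->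
  (f, g) \in Phi -> lvl r g = lvl r h -> spoly_step f h = spoly r g h.
Proof.
move=> prim_f fg eq_lvl; case: (spoly_stepP f h) => [[_ /(_ g fg)] //|[g' [fg' eq_lvl' ->]]].
by rewrite (rhs_unique_at_level prim_f fg' fg) // eq_lvl eq_lvl'.
Qed.

Lemma spoly_step_id f h : ~~ has (fun c => c.1 == f) Phi -> spoly_step f h = h.
Proof.
move=> no_f; case: (spoly_stepP f h) => [[] //|[g [fg _ _]]].
by move/hasPn: no_f => /(_ _ fg); rewrite eqxx.
Qed.

Definition lvl_height p : nat := if p == 0 then 0%N else (lvl r p).+1.

Lemma lvl_height_le p : (lvl_height p <= d.+1)%N.
Proof. by rewrite /lvl_height; case: ifP; rewrite // ltnS lvl_le_dim. Qed.

Lemma spoly_step_decr f h :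
  spoly_step f h = h \/ (lvl_height (spoly_step f h) < lvl_height h)%N.
Proof.
case: (spoly_stepP f h) => [[-> _]|[g [_ eq_lvl ->]]]; first by left.
have [lvl_h|lvl_gt0] := posnP (lvl r h).
  rewrite spoly_constants ?eq_lvl //; have [->|nz_h] := eqVneq h 0; first by left.
  by right; rewrite /lvl_height eqxx (negbTE nz_h).
have nz_h : h != 0 by apply: contraTneq lvl_gt0 => ->; rewrite lvl0.
right; rewrite /lvl_height (negbTE nz_h); case: ifP => // _.
by rewrite ltnS spoly_lvl_lt.
Qed.

Lemma delta_f_orbit f p : primitive f -> inDelta_f r Phi f p ->
  exists2 t, t \in terms Phi & exists2 k, (k < d.+2)%N & p = iter k (spoly_step f) t.
Proof.
move=> prim_f Dp.
suff [t t_in [k ->]] : exists2 t, t \in terms Phi & exists k, p = iter k (spoly_step f) t.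
  have [j le_j ->] := iter_stationary (@spoly_step_decr f) t k.
  by exists t => //; exists j; rewrite // ltnS (leq_trans le_j) ?lvl_height_le.
elim: Dp => [t t_in|g h fg _ [t t_in [k ->]] eq_lvl]; first by exists t => //; exists 0%N.
by exists t => //; exists k.+1; rewrite iterS (spoly_step_spoly prim_f fg eq_lvl).
Qed.

End EliminationProperty.

Section Counting.
Variables (d : nat) (r : {perm 'I_d}) (Phi : system d).

Definition delta_candidates : seq (linpoly d) :=
  [seq iter tk.2 (spoly_step r Phi c.1) tk.1 | c <- Phi,
     tk <- [seq (t, k) | t <- terms Phi, k <- iota 0 d.+2]].

(* |Phi| left-hand sides, 2|Phi| terms and d + 2 lengths. *)
Lemma size_delta_candidates : size delta_candidates = (2 * size Phi ^ 2 * (d + 2))%N.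
Proof.
rewrite !size_allpairs size_iota /terms size_cat !size_map addn2.
by rewrite addnn -mul2n mulnA mulnCA mulnn.
Qed.

Lemma delta_in_candidates p : elimination_property r Phi -> (0 < size Phi)%N ->
  inDelta r Phi p -> p \in delta_candidates.
Proof.
move=> EP Phi_gt0 [f [_ _ [_ [prim_f _]]] Dp].
have [t t_in [k lt_k ->]] := delta_f_orbit EP prim_f Dp.
have mem_c c j : c \in Phi -> (j < d.+2)%N -> iter j (spoly_step r Phi c.1) t \in delta_candidates.
  move=> c_in lt_j; have tj_in : (t, j) \in [seq (t', k') | t' <- terms Phi, k' <- iota 0 d.+2].
    by apply: allpairs_f; rewrite ?mem_iota.
  exact: (allpairs_f (fun (c : linpoly d * linpoly d) (tk : linpoly d * nat) =>
    iter tk.2 (spoly_step r Phi c.1) tk.1) c_in tj_in).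
have [/hasP[c c_in /eqP <-]|no_f] := boolP (has (fun c => c.1 == f) Phi); first exact: mem_c.
by rewrite iter_fix ?spoly_step_id //; apply: (mem_c _ 0%N (mem_nth (lp0 d, lp0 d) Phi_gt0)).
Qed.

End Counting.

Theorem mainTheorem10 (d : nat) (r : {perm 'I_d}) (Phi : system d) :
  (1 <= size Phi)%N ->
  (forall c, c \in Phi -> c.1 != lp0 d) ->
  elimination_property r Phi ->
  (forall s : seq (linpoly d), uniq s -> (forall p, p \in s -> inDelta r Phi p) ->
     (size s <= 2 * (size Phi) ^ 2 * (d + 2))%N) /\
  (forall p, inDelta r Phi p ->
     (bitlen (lp_norm p) <= (d + 2) * (bitlen (sys_norm Phi) + 1))%N).
Proof.
move=> Phi_gt0 _ EP; split=> [s uniq_s in_delta|p [f _ Dp]].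
  have sub_s : {subset s <= delta_candidates r Phi}.
    by move=> p /in_delta; apply: delta_in_candidates.
  by rewrite -(size_delta_candidates r) uniq_leq_size.
apply: bitlen_bound; apply: leq_trans (delta_f_norm Dp) _.
by rewrite leq_mul2r leq_pexp2l ?leq_subr ?orbT.
Qed.
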